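(* Let $u$ be a drift function. The following are equivalent: (i) $\mathcal F^1_u$ and $\mathcal E^1_u$ coincide as sets with equivalent norms; (ii) there are $a\in[0,1)$ and $b\in\mathbb R$ with $Pu\le au+b$ on $\mathbf X$; (iii) $u\in\mathcal E^1_u$.
   Context: $(X_n)$ Markov chain on a complete separable metric space $\mathbf X$, $\mathbb P_x$ its law from $x$, $Pf(x)=\mathbb E_xf(X_1)$; $\tau$ a $\theta$-compatible stopping time ($\mathbb P_x(\tau=0)=0$ and $\mathbb P_x$-a.s. $\tau\ge2\Rightarrow\tau\circ\theta=\tau-1$, $\theta$ the shift) with $\mathbb E_x\tau<\infty$ for all $x$. $Qf(x)=\mathbb E_x[f(X_\tau)\mathbf 1_{\tau<\infty}]$. A drift function is a Borel $u:\mathbf X\to[1,\infty)$ such that $u-Pu$ is bounded below and $Qu$, $x\mapsto\mathbb E_x\tau/u(x)$ and $P(u-Pu+B_u)/(u-Pu+B_u)$ are bounded on $\mathbf X$, where $B_u=\sup_{\mathbf X}(Pu-u)+1$. For Borel $v:\mathbf X\to[1,\infty)$ and $p\ge1$, $\mathcal F^p_v$ is the Banach space of Borel $f$ with $\sup|f|^p/v<\infty$, with norm $\sup_x|f(x)|/v(x)^{1/p}$; $\mathcal E^p_u:=\mathcal F^p_{u-Pu+B_u}$. *)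

From HB Require Import structures.
From mathcomp Require Import all_boot all_order all_algebra.
From mathcomp Require Import all_classical all_reals all_analysis.
Set Implicit Arguments. Unset Strict Implicit. Unset Printing Implicit Defensive.
Import Order.TTheory GRing.Theory Num.Theory.
Import numFieldNormedType.Exports.
Local Open Scope classical_set_scope.
Local Open Scope ring_scope.
Local Open Scope ereal_scope.

Notation borel X := (g_sigma_algebraType (@open X)).

Section Defs.
Context {R : realType} {dX : measure_display} {X : measurableType dX}.

(** [Pf(x) = E_x f(X_1) = \int k(x,dy) f(y)] (extended-real valued). *)
Definition Pop (k : R.-pker X ~> X) (f : X -> R) (x : X) : \bar R :=
  \int[k x]_y (f y)%:E.

(** [P_x(X_0 \in A_0, ..., X_n \in A_n)] computed from the kernel:
    [1_{A_0}(x) \int k(x,dy_1) 1_{A_1}(y_1) \int ... ]. *)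
Fixpoint fdd (k : R.-pker X ~> X) (As : seq (set X)) (x : X) : \bar R :=
  match As with
  | [::] => 1
  | A :: As' => (\1_A x)%:E * \int[k x]_y fdd k As' y
  end.

Context {dO : measure_display} {Omega : measurableType dO}.

Definition markov_chain (k : R.-pker X ~> X) (Xn : nat -> Omega -> X)
    (theta : Omega -> Omega) (Px : X -> probability Omega R) : Prop :=
  (forall n, measurable_fun setT (Xn n)) /\
  measurable_fun setT theta /\
  (forall n w, Xn n (theta w) = Xn n.+1 w) /\
  (forall x (As : seq (set X)), (forall i, measurable (nth setT As i)) ->
     Px x [set w | forall i, (i < size As)%N -> nth setT As i (Xn i w)]
     = fdd k As x).

(** natural filtration: sigma(X_0, ..., X_n) is generated by these sets *)
Definition natfilt (Xn : nat -> Omega -> X) (n : nat) : set (set Omega) :=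
  [set B | exists i A, (i <= n)%N /\ measurable A /\ B = Xn i @^-1` A].

(** stopping times take values in [nat \cup {oo}]; [None] stands for [oo] *)
Definition stopping_time (Xn : nat -> Omega -> X) (tau : Omega -> option nat)
  : Prop := forall n, <<s natfilt Xn n >> [set w | tau w = Some n].

Definition theta_compatible (Px : X -> probability Omega R)
    (theta : Omega -> Omega) (tau : Omega -> option nat) : Prop :=
  forall x, Px x [set w | tau w = Some 0%N] = 0 /\
  {ae Px x, forall w, match tau w with
                      | Some n => (2 <= n)%N -> tau (theta w) = Some n.-1
                      | None => tau (theta w) = None
                      end}.

Definition tauE (tau : Omega -> option nat) (w : Omega) : \bar R :=
  match tau w with Some n => (n%:R)%:E | None => +oo end.

Definition Etau (Px : X -> probability Omega R) (tau : Omega -> option nat)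
  (x : X) : \bar R := \int[Px x]_w tauE tau w.

Definition Qop (Px : X -> probability Omega R) (Xn : nat -> Omega -> X)
    (tau : Omega -> option nat) (f : X -> R) (x : X) : \bar R :=
  \int[Px x]_w (match tau w with Some n => f (Xn n w) | None => 0%R end)%:E.

Definition Bu (k : R.-pker X ~> X) (u : X -> R) : R :=
  (sup (range (fun x => fine (Pop k u x) - u x)) + 1)%R.

Definition Ew (k : R.-pker X ~> X) (u : X -> R) (x : X) : R :=
  (u x - fine (Pop k u x) + Bu k u)%R.

Definition drift_function (k : R.-pker X ~> X) (Px : X -> probability Omega R)
    (Xn : nat -> Omega -> X) (tau : Omega -> option nat) (u : X -> R) : Prop :=
  measurable_fun setT u /\
  (forall x, 1 <= u x)%R /\
  (exists c : R, forall x, c%:E <= (u x)%:E - Pop k u x) /\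
  (exists M : R, forall x, `|Qop Px Xn tau u x| <= M%:E) /\
  (exists M : R, forall x, `|Etau Px tau x| <= (M * u x)%:E) /\
  (exists M : R, forall x, `|Pop k (Ew k u) x| <= (M * Ew k u x)%:E).

Definition Fsp (p : R) (v : X -> R) (f : X -> R) : Prop :=
  measurable_fun setT f /\ exists C : R, forall x, (`|f x| `^ p <= C * v x)%R.

Definition normF (p : R) (v : X -> R) (f : X -> R) : R :=
  sup (range (fun x => `|f x| / v x `^ p^-1))%R.

End Defs.

From HB Require Import structures.
From mathcomp Require Import all_boot all_order all_algebra.
From mathcomp Require Import all_classical all_reals all_analysis.
From mathcomp Require Import lra.
Import Order.TTheory GRing.Theory Num.Theory.
Import numFieldNormedType.Exports.
Local Open Scope classical_set_scope.
Local Open Scope ring_scope.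

(* The three conditions only involve the weights u and w := u - Pu + B_u.
   Since Pu >= 0, always w <= (1 + |B_u|) u; hence (i) and (iii) both amount
   to the reverse domination u <= C w, which rearranges to
   Pu <= (1 - 1/C) u + B_u, i.e. (ii). Conversely (ii) gives
   (1 - a) u <= w + (b - B_u) <= (1 + |b - B_u|) w because w >= 1. *)

Lemma sup_range_le_scale (R : realType) (T : Type) (a b : T -> R) (D : R) :
  0 <= D -> has_ubound (range b) -> (forall x, a x <= D * b x) ->
  sup (range a) <= D * sup (range b).
Proof.
move=> D0 ubb le_ab.
have [[x0 _]|T0] := pselect (exists x : T, True).
- apply: ge_sup; first by exists (a x0), x0.
  move=> _ [x _ <-]; apply: le_trans (le_ab x) _; apply: ler_wpM2l => //.
  by apply: ub_le_sup => //; exists x.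
- have range0 (f : T -> R) : range f = set0.
    by apply/seteqP; split=> // y [x _ _]; case: T0; exists x.
  by rewrite !range0 sup0 mulr0.
Qed.

Lemma ler_pdiv_weights (R : realFieldType) (a v1 v2 D : R) :
  0 < v1 -> 0 < v2 -> 0 <= a -> v2 <= D * v1 -> a / v1 <= D * (a / v2).
Proof.
move=> v1_gt0 v2_gt0 a_ge0 le_v21; rewrite ler_pdivrMr //.
have t_ge0 : 0 <= a / v2 by rewrite divr_ge0 // ltW.
have aE : a = (a / v2) * v2 by rewrite divfK // gt_eqF.
set t := a / v2 in t_ge0 aE *; rewrite [X in X <= _]aE.
have : 0 <= t * (D * v1 - v2) by rewrite mulr_ge0 // subr_ge0.
nra.
Qed.

Section weighted_sup_norm.
Context {R : realType} {d : measure_display} {T : measurableType d}.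

Lemma Fsp1P (v f : T -> R) : (forall x, 0 <= v x) ->
  Fsp 1 v f <-> measurable_fun setT f /\
                exists2 C, 0 < C & forall x, `|f x| <= C * v x.
Proof.
move=> v_ge0; rewrite /Fsp; split=> [[mf [C leC]]|[mf [C _ leC]]]; split=> //.
  exists (`|C| + 1); first by rewrite ltr_pwDr.
  move=> x; apply: le_trans (_ : C * v x <= _).
    by rewrite -(powRr1 (normr_ge0 (f x))).
  by rewrite ler_wpM2r // (le_trans (ler_norm C)) // lerDl.
by exists C => x; rewrite powRr1.
Qed.

Lemma normF1E (v f : T -> R) : (forall x, 1 <= v x) ->
  normF 1 v f = sup (range (fun x => `|f x| / v x)).
Proof.
move=> v_ge1; rewrite /normF invr1.
suff -> : (fun x => `|f x| / v x `^ 1) = (fun x => `|f x| / v x) by [].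
by apply: boolp.funext => x; rewrite powRr1 // (le_trans _ (v_ge1 x)).
Qed.

Variables (v1 v2 : T -> R) (D : R).
Hypotheses (v1_ge1 : forall x, 1 <= v1 x) (v2_ge1 : forall x, 1 <= v2 x).
Hypotheses (D_gt0 : 0 < D) (le_v21 : forall x, v2 x <= D * v1 x).

Let v1_gt0 x : 0 < v1 x. Proof. exact: lt_le_trans (v1_ge1 x). Qed.
Let v2_gt0 x : 0 < v2 x. Proof. exact: lt_le_trans (v2_ge1 x). Qed.

Lemma Fsp1_weight_le (f : T -> R) : Fsp 1 v2 f -> Fsp 1 v1 f.
Proof.
move=> /Fsp1P-[x|mf [C C_gt0 leC]]; first exact: ltW.
apply/Fsp1P => [x|]; first exact: ltW.
split=> //; exists (C * D); first exact: mulr_gt0.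
by move=> x; rewrite -mulrA (le_trans (leC x)) // ler_wpM2l // ltW.
Qed.

Lemma normF1_weight_le (f : T -> R) :
  Fsp 1 v2 f -> normF 1 v1 f <= D * normF 1 v2 f.
Proof.
move=> /Fsp1P-[x|_ [C _ leC]]; first exact: ltW.
rewrite !normF1E //; apply: sup_range_le_scale; first exact: ltW.
  by exists C => _ [x _ <-]; rewrite ler_pdivrMr.
by move=> x; apply: ler_pdiv_weights.
Qed.

End weighted_sup_norm.

Section drift_weights.
Context {R : realType} {dX : measure_display} {X : measurableType dX}.
Variables (k : R.-pker X ~> X) (u : X -> R).
Hypotheses (u_ge1 : forall x, 1 <= u x)
  (u_subP_lbound : exists c : R, forall x, (c%:E <= (u x)%:E - Pop k u x)%E).

Let Pu x := fine (Pop k u x).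

Lemma Pop_drift_ge0 x : (0 <= Pop k u x)%E.
Proof.
by apply: integral_ge0 => y _; rewrite lee_fin (le_trans _ (u_ge1 y)).
Qed.

Lemma Pop_driftE x : Pop k u x = (Pu x)%:E.
Proof.
have [c lec] := u_subP_lbound.
by move: (lec x) (Pop_drift_ge0 x); rewrite /Pu; case: (Pop k u x).
Qed.

Let Pu_ge0 x : 0 <= Pu x.
Proof. by rewrite -lee_fin -Pop_driftE Pop_drift_ge0. Qed.

Lemma le_Bu x : Pu x - u x + 1 <= Bu k u.
Proof.
rewrite /Bu lerD2r; apply: ub_le_sup; last by exists x.
have [c lec] := u_subP_lbound.
exists (- c) => _ [y _ <-].
rewrite -/(Pu y); have := lec y; rewrite Pop_driftE -EFinB lee_fin; lra.
Qed.

Lemma Ew_ge1 x : 1 <= Ew k u x.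
Proof. by have := le_Bu x; rewrite /Ew -/(Pu x); lra. Qed.

Lemma Ew_le_u x : Ew k u x <= (1 + `|Bu k u|) * u x.
Proof.
rewrite /Ew -/(Pu x).
have := Pu_ge0 x; have := u_ge1 x; have := ler_norm (Bu k u).
have : 0 <= `|Bu k u| * (u x - 1) by rewrite mulr_ge0 // subr_ge0.
nra.
Qed.

Lemma Fsp1_Ew_u_dominated :
  Fsp 1 (Ew k u) u -> exists2 C, 0 < C & forall x, u x <= C * Ew k u x.
Proof.
move=> /Fsp1P-[x|_ [C C_gt0 leC]]; first by rewrite (le_trans _ (Ew_ge1 x)).
by exists C => // x; rewrite (le_trans (ler_norm _)).
Qed.

Lemma Fsp1_Ew_u_geometric : Fsp 1 (Ew k u) u ->
  exists a b : R, 0 <= a < 1 /\ forall x, (Pop k u x <= (a * u x + b)%:E)%E.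
Proof.
move=> /Fsp1_Ew_u_dominated[C C_gt0 le_uw].
have C1_ge1 : 1 <= C + 1 by rewrite lerDr ltW.
have C1_gt0 : 0 < C + 1 by exact: lt_le_trans C1_ge1.
exists (1 - (C + 1)^-1), (Bu k u); split.
  by rewrite subr_ge0 invf_le1 //= ltrBlDr ltrDl invr_gt0 C1_ge1 C1_gt0.
move=> x; have : u x / (C + 1) <= Ew k u x.
  rewrite ler_pdivrMr // mulrC (le_trans (le_uw x)) // ler_wpM2r ?lerDl //.
  by rewrite (le_trans _ (Ew_ge1 x)).
rewrite /Ew -/(Pu x) Pop_driftE lee_fin mulrBl mul1r (mulrC _ (u x)); lra.
Qed.

Lemma geometric_Fsp1_Ew_u : measurable_fun setT u ->
  (exists a b : R, 0 <= a < 1 /\ forall x, (Pop k u x <= (a * u x + b)%:E)%E) ->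
  Fsp 1 (Ew k u) u.
Proof.
move=> mu [a [b [/andP[a_ge0 a_lt1] le_Pu]]].
apply/Fsp1P => [x|]; first by rewrite (le_trans _ (Ew_ge1 x)).
split=> //; have a1_gt0 : 0 < 1 - a by rewrite subr_gt0.
exists ((1 + `|b - Bu k u|) / (1 - a)) => [|x].
  by rewrite divr_gt0 // ltr_pwDl.
rewrite ger0_norm; last by rewrite (le_trans _ (u_ge1 x)).
rewrite -(ler_pM2l a1_gt0) mulrA mulrCA divff ?gt_eqF // mulr1.
have := le_Pu x; rewrite Pop_driftE lee_fin => le_Pux.
have := ler_norm (b - Bu k u); have := Ew_ge1 x.
have : `|b - Bu k u| <= `|b - Bu k u| * Ew k u x.
  by rewrite ler_peMr // Ew_ge1.
by rewrite /Ew -/(Pu x); nra.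
Qed.

Lemma Fsp1_Ew_u_equiv_norms : Fsp 1 (Ew k u) u ->
  (forall f : X -> R, Fsp 1 u f <-> Fsp 1 (Ew k u) f) /\
  (exists c C : R, 0 < c /\ 0 < C /\
     forall f : X -> R, Fsp 1 u f ->
       c * normF 1 u f <= normF 1 (Ew k u) f /\
       normF 1 (Ew k u) f <= C * normF 1 u f).
Proof.
move=> /Fsp1_Ew_u_dominated[C C_gt0 le_uw].
have D_gt0 : 0 < 1 + `|Bu k u| by rewrite ltr_pwDl.
have Fuw := Fsp1_weight_le _ _ _ Ew_ge1 u_ge1 C_gt0 le_uw.
have Fwu := Fsp1_weight_le _ _ _ u_ge1 Ew_ge1 D_gt0 Ew_le_u.
split=> [f|]; first by split; [exact: Fuw | exact: Fwu].
exists (1 + `|Bu k u|)^-1, C.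
split; first by rewrite invr_gt0.
split=> // f Fuf; split.
- rewrite -(ler_pM2l D_gt0) mulrA divff ?gt_eqF // mul1r.
  exact (normF1_weight_le _ _ _ u_ge1 Ew_ge1 D_gt0 Ew_le_u f (Fuw f Fuf)).
- exact (normF1_weight_le _ _ _ Ew_ge1 u_ge1 C_gt0 le_uw f Fuf).
Qed.

End drift_weights.

Theorem mainTheorem11 (R : realType) (X : completePseudoMetricType R)
  (hX : hausdorff_space X)
  (sepX : exists D : set X, countable D /\ dense D)
  (dO : measure_display) (Omega : measurableType dO)
  (k : R.-pker borel X ~> borel X)
  (Xn : nat -> Omega -> borel X) (theta : Omega -> Omega)
  (Px : borel X -> probability Omega R)
  (hM : markov_chain k Xn theta Px)
  (tau : Omega -> option nat)
  (htau : stopping_time Xn tau)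
  (htheta : theta_compatible Px theta tau)
  (hEtau : forall x, (Etau Px tau x < +oo)%E)
  (u : borel X -> R)
  (hu : drift_function k Px Xn tau u) :
  [<->
    (* (i) F^1_u = E^1_u as sets, with equivalent norms *)
    (forall f : borel X -> R, Fsp 1 u f <-> Fsp 1 (Ew k u) f) /\
    (exists c C : R, 0 < c /\ 0 < C /\
       forall f : borel X -> R, Fsp 1 u f ->
         c * normF 1 u f <= normF 1 (Ew k u) f /\
         normF 1 (Ew k u) f <= C * normF 1 u f);
    (* (ii) Pu <= a u + b with a in [0,1) *)
    exists a b : R, 0 <= a < 1 /\ forall x, (Pop k u x <= (a * u x + b)%:E)%E;
    (* (iii) u in E^1_u *)
    Fsp 1 (Ew k u) u].
Proof.
case: hu => mu [u_ge1 [u_subP_lbound _]].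
have Fsp1_u_u : Fsp 1 u u.
  apply/Fsp1P => [x|]; first by rewrite (le_trans _ (u_ge1 x)).
  split=> //; exists 1 => // x.
  by rewrite mul1r ger0_norm // (le_trans _ (u_ge1 x)).
tfae.
- by move=> [Fuw _]; apply: Fsp1_Ew_u_geometric => //; apply/Fuw.
- exact: geometric_Fsp1_Ew_u.
- exact: Fsp1_Ew_u_equiv_norms.
Qed.
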